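(* Let $S$ be a 3-manifold with local coordinates $(x^1,x^2,\varphi)$ and initial data $(g,K)$ with $$g=g_{ab}\,dx^adx^b+\alpha^2(d\varphi+\beta_adx^a)^2\qquad(a,b\in\{1,2\}),$$ all components independent of $\varphi$, and use the frame dual to $\theta^a=dx^a$, $\theta^3=d\varphi+\beta_adx^a$. Let ${}_{|a}$ and $\eta^{ab}$ be the covariant derivative and Levi-Civita tensor of $g_{ab}$, indices $a,b$ being raised/lowered with $g_{ab}$, let $\lambda=\eta^{ab}\beta_{a,b}$, and let $\omega(x^1,x^2)$ be a function. Assume $\alpha$ is not constant, and work where $\alpha^{,c}\alpha_{,c}\neq0$. Define $$\triangledown\alpha=(\alpha^{,c}\alpha_{,c})^{1/2},\quad \xi_b=\frac{\alpha_{,b}}{\triangledown\alpha},\quad \eta^a=\eta^{ab}\xi_b,\quad \kappa=\eta^{bc}\alpha_{,b}(\triangledown\alpha)_{,c}(\triangledown\alpha)^{-2}.$$ Then: (1) The components $T^{ab}$ correspond uniquely to functions $T^a,T^0$ via $$T^{ab}=\eta^aT^b+\xi^a\eta^bT^c\xi_c+\xi^a\xi^bT^0,\qquad T^a=T^{ab}\eta_b,\quad T^0=\xi_aT^{ab}\xi_b.$$ (2) If the functions $\alpha$ and $\triangledown\alpha$ are functionally independent, then the equation $$(\alpha T_a^{\ b})_{|b}=T_3^{\ 3}\alpha_{,a}+\lambda\omega_{,a}\qquad(\ast)$$ is equivalent to the pair of equations $$\alpha\kappa T^0=(\alpha T^a)_{|a}+\alpha\xi_bT^b\xi^a_{\ |a}-\lambda\eta^a\omega_{,a},$$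 $$(\triangledown\alpha)T_3^{\ 3}=(\alpha T^0\xi^b+\alpha\xi_aT^a\eta^b)_{|b}-\alpha\eta^b\xi_{b|a}T^a-\lambda\xi^a\omega_{,a},$$ which determine $T^0$ and $T_3^{\ 3}$ in terms of the remaining data. (3) If $\alpha$ and $\triangledown\alpha$ are functionally dependent, then $(\ast)$ is equivalent to the second equation in (2) together with $$(\alpha\eta_bT^b\eta^a)_{|a}=-(\alpha\xi_bT^b\xi^a)_{|a}-\alpha\xi_bT^b\xi^a_{\ |a}+\lambda\eta^a\omega_{,a}.$$
   Context: Initial data on a 3-manifold $S$: Riemannian metric $g_{ij}$ and symmetric tensor $K_{ij}$; $H=g^{ij}K_{ij}$, $T^{ij}=K^{ij}-Hg^{ij}$. For data independent of $\varphi$ of the stated form, the momentum constraint $\nabla_iT^{ij}=0$ is equivalent to $T_3^{\ a}=\alpha^{-1}\eta^{ab}\omega_{,b}$ for some function $\omega(x^1,x^2)$ together with equation $(\ast)$. Commas denote partial derivatives. *)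

From Stdlib Require Import Reals Lra.
From Coquelicot Require Import Coquelicot.
Open Scope R_scope.

(** Functions of the two coordinates (x^1, x^2); indices a,b range over {0,1}
    (0 <-> x^1, 1 <-> x^2).  Everything is independent of phi. *)
Definition Fun := R -> R -> R.

Definition sum2 (f : nat -> R) : R := f 0%nat + f 1%nat.

Definition partial (i : nat) (f : Fun) : Fun :=
  match i with
  | 0%nat => fun x y => Derive (fun t => f t y) x
  | _ => fun x y => Derive (fun t => f x t) y
  end.

Definition C0 (U : R * R -> Prop) (f : Fun) : Prop :=
  forall x y, U (x, y) -> continuous (fun p : R * R => f (fst p) (snd p)) (x, y).

Fixpoint Ck (k : nat) (U : R * R -> Prop) (f : Fun) : Prop :=
  match k with
  | 0%nat => C0 U f
  | S k' => (forall x y, U (x, y) ->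
               ex_derive (fun t => f t y) x /\ ex_derive (fun t => f x t) y)
            /\ C0 U f /\ Ck k' U (partial 0 f) /\ Ck k' U (partial 1 f)
  end.

Definition smooth (U : R * R -> Prop) (f : Fun) : Prop := forall k, Ck k U f.

Definition detg (g : nat -> nat -> Fun) : Fun :=
  fun x y => g 0%nat 0%nat x y * g 1%nat 1%nat x y - g 0%nat 1%nat x y * g 1%nat 0%nat x y.

Definition ginv (g : nat -> nat -> Fun) (a b : nat) : Fun :=
  fun x y =>
    match a, b with
    | 0%nat, 0%nat => g 1%nat 1%nat x y / detg g x y
    | 0%nat, _ => - g 0%nat 1%nat x y / detg g x y
    | _, 0%nat => - g 1%nat 0%nat x y / detg g x y
    | _, _ => g 0%nat 0%nat x y / detg g x y
    end.

Definition eps (a b : nat) : R :=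
  match a, b with
  | 0%nat, 1%nat => 1
  | 1%nat, 0%nat => -1
  | _, _ => 0
  end.

Definition etaU (g : nat -> nat -> Fun) (a b : nat) : Fun :=
  fun x y => eps a b / sqrt (detg g x y).

Definition Gam (g : nat -> nat -> Fun) (c a b : nat) : Fun :=
  fun x y => / 2 * sum2 (fun d => ginv g c d x y *
     (partial b (g d a) x y + partial a (g d b) x y - partial d (g a b) x y)).

Definition divV (g : nat -> nat -> Fun) (V : nat -> Fun) : Fun :=
  fun x y => sum2 (fun a => partial a (V a) x y
                     + sum2 (fun b => Gam g a a b x y * V b x y)).

Definition covD (g : nat -> nat -> Fun) (w : nat -> Fun) (b a : nat) : Fun :=
  fun x y => partial a (w b) x y - sum2 (fun c => Gam g c b a x y * w c x y).

Definition divMixed (g : nat -> nat -> Fun) (M : nat -> nat -> Fun) (a : nat) : Fun :=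
  fun x y => sum2 (fun b => partial b (M a b) x y
                  + sum2 (fun c => Gam g b b c x y * M a c x y)
                  - sum2 (fun c => Gam g c a b x y * M c b x y)).

Definition raise (g : nat -> nat -> Fun) (w : nat -> Fun) (a : nat) : Fun :=
  fun x y => sum2 (fun b => ginv g a b x y * w b x y).
Definition lower (g : nat -> nat -> Fun) (V : nat -> Fun) (a : nat) : Fun :=
  fun x y => sum2 (fun b => g a b x y * V b x y).

Definition dalpha (alpha : Fun) (a : nat) : Fun := partial a alpha.
Definition gradsq (g : nat -> nat -> Fun) (alpha : Fun) : Fun :=
  fun x y => sum2 (fun c => raise g (dalpha alpha) c x y * dalpha alpha c x y).
Definition nab (g : nat -> nat -> Fun) (alpha : Fun) : Fun :=
  fun x y => sqrt (gradsq g alpha x y).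

Definition xiL g alpha (b : nat) : Fun :=
  fun x y => dalpha alpha b x y / nab g alpha x y.
Definition xiU g alpha : nat -> Fun := raise g (xiL g alpha).
Definition etaV g alpha (a : nat) : Fun :=
  fun x y => sum2 (fun b => etaU g a b x y * xiL g alpha b x y).
Definition etaVL g alpha : nat -> Fun := lower g (etaV g alpha).
Definition kappa g alpha : Fun :=
  fun x y => sum2 (fun b => sum2 (fun c =>
     etaU g b c x y * dalpha alpha b x y * partial c (nab g alpha) x y))
     / (nab g alpha x y) ^ 2.
Definition lam g (beta : nat -> Fun) : Fun :=
  fun x y => sum2 (fun a => sum2 (fun b => etaU g a b x y * partial b (beta a) x y)).

Definition TV g alpha (T : nat -> nat -> Fun) (a : nat) : Fun :=
  fun x y => sum2 (fun b => T a b x y * etaVL g alpha b x y).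
Definition T0 g alpha (T : nat -> nat -> Fun) : Fun :=
  fun x y => sum2 (fun a => sum2 (fun b =>
     xiL g alpha a x y * T a b x y * xiL g alpha b x y)).
Definition Tmix g (T : nat -> nat -> Fun) (a b : nat) : Fun :=
  fun x y => sum2 (fun c => g a c x y * T c b x y).

Definition recomb g alpha (Tv : nat -> Fun) (t0 : Fun) (a b : nat) : Fun :=
  fun x y => etaV g alpha a x y * Tv b x y
     + xiU g alpha a x y * etaV g alpha b x y
         * sum2 (fun c => Tv c x y * xiL g alpha c x y)
     + xiU g alpha a x y * xiU g alpha b x y * t0 x y.

Definition jac2 (f h : Fun) : Fun :=
  fun x y => partial 0 f x y * partial 1 h x y - partial 1 f x y * partial 0 h x y.
Definition func_indep (U : R * R -> Prop) (f h : Fun) : Prop :=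
  forall x y, U (x, y) -> jac2 f h x y <> 0.
Definition func_dep (U : R * R -> Prop) (f h : Fun) : Prop :=
  forall x y, U (x, y) -> jac2 f h x y = 0.

Definition star_eq (g : nat -> nat -> Fun) (alpha : Fun) (beta : nat -> Fun)
  (omega T33 : Fun) (T : nat -> nat -> Fun) (a : nat) (x y : R) : Prop :=
  divMixed g (fun a' b' => fun x' y' => alpha x' y' * Tmix g T a' b' x' y') a x y
  = T33 x y * dalpha alpha a x y + lam g beta x y * partial a omega x y.

Definition eqA (g : nat -> nat -> Fun) (alpha : Fun) (beta : nat -> Fun)
  (omega : Fun) (T : nat -> nat -> Fun) (x y : R) : Prop :=
  alpha x y * kappa g alpha x y * T0 g alpha T x y
  = divV g (fun a => fun x' y' => alpha x' y' * TV g alpha T a x' y') x y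
    + alpha x y * sum2 (fun b => xiL g alpha b x y * TV g alpha T b x y)
        * divV g (xiU g alpha) x y
    - lam g beta x y * sum2 (fun a => etaV g alpha a x y * partial a omega x y).

Definition eqB (g : nat -> nat -> Fun) (alpha : Fun) (beta : nat -> Fun)
  (omega T33 : Fun) (T : nat -> nat -> Fun) (x y : R) : Prop :=
  nab g alpha x y * T33 x y
  = divV g (fun b => fun x' y' =>
        alpha x' y' * T0 g alpha T x' y' * xiU g alpha b x' y'
      + alpha x' y' * sum2 (fun a => xiL g alpha a x' y' * TV g alpha T a x' y')
          * etaV g alpha b x' y') x y
    - alpha x y * sum2 (fun b => sum2 (fun a =>
        etaV g alpha b x y * covD g (xiL g alpha) b a x y * TV g alpha T a x y))
    - lam g beta x y * sum2 (fun a => xiU g alpha a x y * partial a omega x y).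

Definition eqC (g : nat -> nat -> Fun) (alpha : Fun) (beta : nat -> Fun)
  (omega : Fun) (T : nat -> nat -> Fun) (x y : R) : Prop :=
  divV g (fun a => fun x' y' =>
     alpha x' y' * sum2 (fun b => etaVL g alpha b x' y' * TV g alpha T b x' y')
       * etaV g alpha a x' y') x y
  = - divV g (fun a => fun x' y' =>
        alpha x' y' * sum2 (fun b => xiL g alpha b x' y' * TV g alpha T b x' y')
          * xiU g alpha a x' y') x y
    - alpha x y * sum2 (fun b => xiL g alpha b x y * TV g alpha T b x y)
        * divV g (xiU g alpha) x y
    + lam g beta x y * sum2 (fun a => etaV g alpha a x y * partial a omega x y).

Definition cst (r : R) : Fun := fun _ _ => r.

(* Away from the critical points of alpha the unit gradient xi = d alpha / |d alpha| and its
   rotation eta form an orthonormal frame of g_ab, so that g = xi xi + eta eta.  Its covariant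
   derivatives are governed by one connection form w_b = eta^c xi_{c|b}: xi_{|b} = eta w_b,
   eta_{|b} = - xi w_b, xi^b w_b = - kappa and xi^a_{|a} = eta^a w_a.  Projecting the covector
   equation (star) on eta and on xi, and expanding T^ab in the frame, turns it into the first
   and the second equation of (2) respectively.  When alpha and triangledown alpha are
   functionally dependent kappa vanishes, and splitting (alpha T^a)_{|a} into its eta- and
   xi-parts turns the first equation into the equation of (3). *)
From Stdlib Require Import Reals Lra Lia.
From Coquelicot Require Import Coquelicot.
Open Scope R_scope.

Arguments partial i f : simpl never.

Definition diff_on (U : R * R -> Prop) (f : Fun) : Prop :=
  forall x y, U (x, y) -> ex_derive (fun t => f t y) x /\ ex_derive (fun t => f x t) y.

Section DiffOn.
Variable U : R * R -> Prop.

Lemma diff_on_plus f h : diff_on U f -> diff_on U h -> diff_on U (fun x y => f x y + h x y).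
Proof.
  intros Hf Hh x y Hp; destruct (Hf x y Hp), (Hh x y Hp).
  split; apply (@ex_derive_plus R_AbsRing R_NormedModule); assumption.
Qed.

Lemma diff_on_minus f h : diff_on U f -> diff_on U h -> diff_on U (fun x y => f x y - h x y).
Proof.
  intros Hf Hh x y Hp; destruct (Hf x y Hp), (Hh x y Hp).
  split; apply (@ex_derive_minus R_AbsRing R_NormedModule); assumption.
Qed.

Lemma diff_on_mult f h : diff_on U f -> diff_on U h -> diff_on U (fun x y => f x y * h x y).
Proof.
  intros Hf Hh x y Hp; destruct (Hf x y Hp), (Hh x y Hp).
  split; apply ex_derive_mult; assumption.
Qed.

Lemma diff_on_opp f : diff_on U f -> diff_on U (fun x y => - f x y).
Proof.
  intros Hf x y Hp; destruct (Hf x y Hp).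
  split; apply (@ex_derive_opp R_AbsRing R_NormedModule); assumption.
Qed.

Lemma diff_on_const c : diff_on U (fun _ _ => c).
Proof. intros x y _; split; apply ex_derive_const. Qed.

Lemma diff_on_div f h : diff_on U f -> diff_on U h ->
  (forall x y, U (x, y) -> h x y <> 0) -> diff_on U (fun x y => f x y / h x y).
Proof.
  intros Hf Hh Hn x y Hp; destruct (Hf x y Hp), (Hh x y Hp).
  split; apply ex_derive_div; auto.
Qed.

Lemma diff_on_sqrt f : diff_on U f -> (forall x y, U (x, y) -> 0 < f x y) ->
  diff_on U (fun x y => sqrt (f x y)).
Proof.
  intros Hf Hpos x y Hp; destruct (Hf x y Hp) as [[d0 H0] [d1 H1]].
  split; eexists; apply is_derive_sqrt; eauto.
Qed.

Lemma smooth_diff_on f : smooth U f -> diff_on U f.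
Proof. intros H; exact (proj1 (H 1%nat)). Qed.

Lemma smooth_partial f i : smooth U f -> smooth U (partial i f).
Proof.
  intros H k; destruct (H (S k)) as (_ & _ & H0 & H1).
  destruct i; assumption.
Qed.

Variables x y : R.
Hypothesis Hp : U (x, y).

Lemma partial_plus k f h : diff_on U f -> diff_on U h ->
  partial k (fun x y => f x y + h x y) x y = partial k f x y + partial k h x y.
Proof.
  intros Hf Hh; destruct (Hf x y Hp), (Hh x y Hp).
  destruct k; apply Derive_plus; assumption.
Qed.

Lemma partial_minus k f h : diff_on U f -> diff_on U h ->
  partial k (fun x y => f x y - h x y) x y = partial k f x y - partial k h x y.
Proof.
  intros Hf Hh; destruct (Hf x y Hp), (Hh x y Hp).
  destruct k; apply Derive_minus; assumption.
Qed.

Lemma partial_mult k f h : diff_on U f -> diff_on U h ->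
  partial k (fun x y => f x y * h x y) x y
  = partial k f x y * h x y + f x y * partial k h x y.
Proof.
  intros Hf Hh; destruct (Hf x y Hp), (Hh x y Hp).
  destruct k; apply (Derive_mult (fun t => _) (fun t => _)); assumption.
Qed.

Lemma partial_opp k f : partial k (fun x y => - f x y) x y = - partial k f x y.
Proof. destruct k; unfold partial; apply Derive_opp. Qed.

Lemma partial_const k c : partial k (fun _ _ => c) x y = 0.
Proof. destruct k; unfold partial; apply Derive_const. Qed.

Lemma partial_div k f h : diff_on U f -> diff_on U h -> h x y <> 0 ->
  partial k (fun x y => f x y / h x y) x y
  = (partial k f x y * h x y - f x y * partial k h x y) / (h x y) ^ 2.
Proof.
  intros Hf Hh Hn; destruct (Hf x y Hp), (Hh x y Hp).
  destruct k; apply (Derive_div (fun t => _) (fun t => _)); assumption.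
Qed.

Lemma partial_sqrt k f : diff_on U f -> 0 < f x y ->
  partial k (fun x y => sqrt (f x y)) x y = partial k f x y / (2 * sqrt (f x y)).
Proof.
  intros Hf Hpos; destruct (Hf x y Hp).
  destruct k; unfold partial; apply is_derive_unique.
  - apply (is_derive_sqrt (fun t => f t y)); [apply Derive_correct|]; assumption.
  - apply (is_derive_sqrt (fun t => f x t)); [apply Derive_correct|]; assumption.
Qed.

Lemma partial_ext_open k f h : open U ->
  (forall x y, U (x, y) -> f x y = h x y) -> partial k f x y = partial k h x y.
Proof.
  intros HU Heq; destruct (HU (x, y) Hp) as [e He].
  destruct k; apply Derive_ext_loc; exists e; intros t Ht;
    apply Heq, He; split; simpl; auto using ball_center.
Qed.

Lemma partial_comm f : open U -> smooth U f ->
  partial 0 (partial 1 f) x y = partial 1 (partial 0 f) x y.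
Proof.
  intros HU Hs.
  destruct (Hs 2%nat) as (Hd & _ & (Hd0 & _ & _ & Hc01) & (Hd1 & _ & Hc10 & _)).
  destruct (HU (x, y) Hp) as [e He].
  apply Schwarz.
  - exists e; intros u v Hu Hv.
    assert (Huv : U (u, v)) by (apply He; split; assumption).
    destruct (Hd u v Huv), (Hd0 u v Huv), (Hd1 u v Huv).
    repeat split; assumption.
  - apply continuity_2d_pt_filterlim, Hc10, Hp.
  - apply continuity_2d_pt_filterlim, Hc01, Hp.
Qed.

End DiffOn.

Lemma frame_of_unit_covector (G00 G01 G11 a0 a1 N sd : R) :
  0 < N -> 0 < sd -> sd * sd = G00 * G11 - G01 * G01 ->
  N * N = (G11 * a0 * a0 - 2 * G01 * a0 * a1 + G00 * a1 * a1) / (sd * sd) ->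
  let x0 := a0 / N in let x1 := a1 / N in
  let e0 := (G00 * x1 - G01 * x0) / sd in let e1 := (G01 * x1 - G11 * x0) / sd in
  G00 = x0 * x0 + e0 * e0 /\ G01 = x0 * x1 + e0 * e1 /\ G11 = x1 * x1 + e1 * e1 /\
  sd = x1 * e0 - x0 * e1.
Proof.
  intros HN Hs HD HQ x0 x1 e0 e1.
  assert (Hunit : G11 * x0 * x0 - 2 * G01 * x0 * x1 + G00 * x1 * x1 = sd * sd).
  { unfold x0, x1; apply (Rmult_eq_reg_r (N * N)); [|nra].
    transitivity (G11 * a0 * a0 - 2 * G01 * a0 * a1 + G00 * a1 * a1); [field; lra|].
    rewrite HQ; field; nra. }
  assert (E0 : e0 * sd = G00 * x1 - G01 * x0) by (unfold e0; field; lra).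
  assert (E1 : e1 * sd = G01 * x1 - G11 * x0) by (unfold e1; field; lra).
  assert (Hsd2 : sd * sd <> 0) by nra.
  repeat split; apply (Rmult_eq_reg_r (sd * sd)); auto; rewrite <- Hunit at 1.
  - transitivity (x0 * x0 * (G00 * G11 - G01 * G01) + (e0 * sd) * (e0 * sd));
      [rewrite E0; ring | rewrite <- HD; ring].
  - transitivity (x0 * x1 * (G00 * G11 - G01 * G01) + (e0 * sd) * (e1 * sd));
      [rewrite E0, E1; ring | rewrite <- HD; ring].
  - transitivity (x1 * x1 * (G00 * G11 - G01 * G01) + (e1 * sd) * (e1 * sd));
      [rewrite E1; ring | rewrite <- HD; ring].
  - transitivity (sd * (x1 * (e0 * sd) - x0 * (e1 * sd))); [rewrite E0, E1|]; ring.
Qed.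

Opaque partial Derive sqrt.

Definition frame_conn (g : nat -> nat -> Fun) (alpha : Fun) (b : nat) (x y : R) : R :=
  sum2 (fun c => etaV g alpha c x y * covD g (xiL g alpha) c b x y).

Definition alpha_Tmix (g : nat -> nat -> Fun) (alpha : Fun) (T : nat -> nat -> Fun)
  (a b : nat) : Fun :=
  fun x y => alpha x y * Tmix g T a b x y.

Lemma sum2_ext (f h : nat -> R) : (forall i, (i < 2)%nat -> f i = h i) -> sum2 f = sum2 h.
Proof. intros H; unfold sum2; rewrite (H 0%nat), (H 1%nat); auto. Qed.

Lemma divV_ext_open U g (V W : nat -> Fun) x y : open U -> U (x, y) ->
  (forall b x y, (b < 2)%nat -> U (x, y) -> V b x y = W b x y) ->
  divV g V x y = divV g W x y.
Proof.
  intros HU Hp H; unfold divV, sum2.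
  rewrite (partial_ext_open U x y Hp 0%nat (V 0%nat) (W 0%nat)) by auto.
  rewrite (partial_ext_open U x y Hp 1%nat (V 1%nat) (W 1%nat)) by auto.
  rewrite !(H 0%nat x y), !(H 1%nat x y); auto.
Qed.

Lemma divV_plus U g (V W : nat -> Fun) x y : U (x, y) ->
  diff_on U (V 0%nat) -> diff_on U (V 1%nat) -> diff_on U (W 0%nat) -> diff_on U (W 1%nat) ->
  divV g (fun a x y => V a x y + W a x y) x y = divV g V x y + divV g W x y.
Proof.
  intros Hp H0 H1 H2 H3; unfold divV, sum2.
  rewrite !(partial_plus U x y Hp) by assumption; ring.
Qed.

Section Frame.
Variables (U : R * R -> Prop) (g : nat -> nat -> Fun) (alpha : Fun) (T : nat -> nat -> Fun).
Hypothesis HU : open U.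
Hypothesis Hg_smooth : forall a b, (a < 2)%nat -> (b < 2)%nat -> smooth U (g a b).
Hypothesis Halpha_smooth : smooth U alpha.
Hypothesis HT_smooth : forall a b, (a < 2)%nat -> (b < 2)%nat -> smooth U (T a b).
Hypothesis Hmetric : forall x y, U (x, y) ->
  g 0%nat 1%nat x y = g 1%nat 0%nat x y /\ 0 < g 0%nat 0%nat x y /\ 0 < detg g x y.
Hypothesis Hgrad : forall x y, U (x, y) -> gradsq g alpha x y <> 0.
Hypothesis HT_sym : forall x y, U (x, y) -> T 0%nat 1%nat x y = T 1%nat 0%nat x y.

Lemma detg_pos x y : U (x, y) -> 0 < detg g x y.
Proof. intros Hp; apply (Hmetric x y Hp). Qed.

Lemma sqrt_detg_pos x y : U (x, y) -> 0 < sqrt (detg g x y).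
Proof. intros Hp; apply sqrt_lt_R0, detg_pos, Hp. Qed.

Lemma gradsq_quadratic x y : U (x, y) ->
  gradsq g alpha x y =
  (g 1%nat 1%nat x y * dalpha alpha 0 x y * dalpha alpha 0 x y
   - 2 * g 0%nat 1%nat x y * dalpha alpha 0 x y * dalpha alpha 1 x y
   + g 0%nat 0%nat x y * dalpha alpha 1 x y * dalpha alpha 1 x y) / detg g x y.
Proof.
  intros Hp; destruct (Hmetric x y Hp) as (H01 & _ & Hd).
  unfold gradsq, raise, ginv, sum2; cbv beta iota; rewrite <- H01.
  field; lra.
Qed.

Lemma gradsq_pos x y : U (x, y) -> 0 < gradsq g alpha x y.
Proof.
  intros Hp; destruct (Hmetric x y Hp) as (H01 & H00 & Hd).
  assert (Hge : 0 <= gradsq g alpha x y).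
  { rewrite (gradsq_quadratic x y Hp).
    apply Rmult_le_pos; [|apply Rlt_le, Rinv_0_lt_compat; assumption].
    unfold detg in Hd; rewrite <- H01 in Hd.
    apply (Rmult_le_reg_l (g 0%nat 0%nat x y)); [assumption|].
    rewrite Rmult_0_r.
    replace (g 0%nat 0%nat x y * _) with
      ((g 0%nat 0%nat x y * dalpha alpha 1 x y - g 0%nat 1%nat x y * dalpha alpha 0 x y) ^ 2
       + (g 0%nat 0%nat x y * g 1%nat 1%nat x y - g 0%nat 1%nat x y * g 0%nat 1%nat x y)
         * dalpha alpha 0 x y ^ 2) by ring.
    apply Rplus_le_le_0_compat; [apply pow2_ge_0|].
    apply Rmult_le_pos; [lra | apply pow2_ge_0]. }
  destruct Hge; [assumption|].
  exfalso; apply (Hgrad x y Hp); auto.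
Qed.

Lemma nab_pos x y : U (x, y) -> 0 < nab g alpha x y.
Proof. intros Hp; apply sqrt_lt_R0, gradsq_pos, Hp. Qed.

Lemma diff_on_g a b : (a < 2)%nat -> (b < 2)%nat -> diff_on U (g a b).
Proof. intros; apply smooth_diff_on; auto. Qed.

Lemma diff_on_T a b : (a < 2)%nat -> (b < 2)%nat -> diff_on U (T a b).
Proof. intros; apply smooth_diff_on; auto. Qed.

Lemma diff_on_alpha : diff_on U alpha.
Proof. apply smooth_diff_on; auto. Qed.

Lemma diff_on_dalpha c : diff_on U (dalpha alpha c).
Proof. apply smooth_diff_on, smooth_partial; auto. Qed.

Ltac diff_on_by leaf := repeat match goal with
  | |- diff_on ?V ?f =>
      lazymatch f with (fun _ _ => _) => fail | _ => change (diff_on V (fun x y => f x y)) end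
  | |- diff_on _ (fun x y => @?a x y + @?b x y) => apply (diff_on_plus U a b)
  | |- diff_on _ (fun x y => @?a x y - @?b x y) => apply (diff_on_minus U a b)
  | |- diff_on _ (fun x y => @?a x y * @?b x y) => apply (diff_on_mult U a b)
  | |- diff_on _ (fun x y => - @?a x y) => apply (diff_on_opp U a)
  | |- diff_on _ (fun x y => @?a x y / @?b x y) =>
      apply (diff_on_div U a b);
      [ | | intros; apply Rgt_not_eq;
            first [apply detg_pos | apply nab_pos | apply sqrt_detg_pos]; assumption]
  | |- diff_on _ (fun x y => sqrt (detg g x y)) =>
      apply diff_on_sqrt; [|exact detg_pos]
  | |- diff_on _ (fun x y => sqrt (gradsq g alpha x y)) =>
      apply diff_on_sqrt; [|exact gradsq_pos]
  | |- diff_on _ (fun x y => detg g x y) => unfold detg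
  | |- diff_on _ (fun x y => nab g alpha x y) => unfold nab
  | |- diff_on _ (fun x y => gradsq g alpha x y) => unfold gradsq, raise, ginv, sum2; cbv beta iota
  | |- diff_on _ (fun x y => g ?a ?b x y) => apply (diff_on_g a b); lia
  | |- diff_on _ (fun x y => T ?a ?b x y) => apply (diff_on_T a b); lia
  | |- diff_on _ (fun x y => alpha x y) => apply diff_on_alpha
  | |- diff_on _ (fun x y => dalpha alpha ?c x y) => apply (diff_on_dalpha c)
  | |- diff_on _ (fun x y => partial ?c alpha x y) => apply (diff_on_dalpha c)
  | |- diff_on _ (fun x y => ?c) => apply (diff_on_const U c)
  | |- diff_on _ _ => progress (unfold sum2; cbv beta)
  | |- _ => leaf
  end.

Lemma diff_on_nab : diff_on U (nab g alpha).
Proof. unfold nab; diff_on_by fail. Qed.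

Lemma diff_on_xiL c : diff_on U (xiL g alpha c).
Proof.
  unfold xiL; diff_on_by ltac:(apply diff_on_nab).
Qed.

Lemma diff_on_xiU a : (a < 2)%nat -> diff_on U (xiU g alpha a).
Proof.
  intros Ha; unfold xiU, raise, ginv, sum2.
  destruct a as [|[|a]]; try lia; cbv beta iota; diff_on_by ltac:(apply diff_on_xiL).
Qed.

Lemma diff_on_etaV a : diff_on U (etaV g alpha a).
Proof.
  unfold etaV, etaU, sum2; diff_on_by ltac:(apply diff_on_xiL).
Qed.

Lemma diff_on_etaVL a : (a < 2)%nat -> diff_on U (etaVL g alpha a).
Proof.
  intros Ha; unfold etaVL, lower, sum2; diff_on_by ltac:(apply diff_on_etaV).
Qed.

Lemma diff_on_TV a : (a < 2)%nat -> diff_on U (TV g alpha T a).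
Proof.
  intros Ha; unfold TV, sum2; diff_on_by ltac:(apply diff_on_etaVL; lia).
Qed.

Lemma diff_on_alpha_Tmix a b : (a < 2)%nat -> (b < 2)%nat -> diff_on U (alpha_Tmix g alpha T a b).
Proof.
  intros Ha Hb; unfold alpha_Tmix, Tmix, sum2; diff_on_by fail.
Qed.

Ltac diff_on_frame := diff_on_by ltac:(idtac; match goal with
  | |- diff_on _ (fun x y => xiL g alpha ?a x y) => apply (diff_on_xiL a)
  | |- diff_on _ (fun x y => xiU g alpha ?a x y) => apply (diff_on_xiU a); lia
  | |- diff_on _ (fun x y => etaV g alpha ?a x y) => apply (diff_on_etaV a)
  | |- diff_on _ (fun x y => etaVL g alpha ?a x y) => apply (diff_on_etaVL a); lia
  | |- diff_on _ (fun x y => TV g alpha T ?a x y) => apply (diff_on_TV a); lia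
  end).

Lemma frame_at x y : U (x, y) -> exists x0 x1 e0 e1 N sd,
  0 < N /\ 0 < sd /\
  xiL g alpha 0%nat x y = x0 /\ xiL g alpha 1%nat x y = x1 /\
  etaVL g alpha 0%nat x y = e0 /\ etaVL g alpha 1%nat x y = e1 /\
  nab g alpha x y = N /\ sqrt (detg g x y) = sd /\ detg g x y = sd * sd /\
  partial 0%nat alpha x y = N * x0 /\ partial 1%nat alpha x y = N * x1 /\
  g 0%nat 0%nat x y = x0 * x0 + e0 * e0 /\ g 0%nat 1%nat x y = x0 * x1 + e0 * e1 /\
  g 1%nat 0%nat x y = x0 * x1 + e0 * e1 /\ g 1%nat 1%nat x y = x1 * x1 + e1 * e1 /\
  sd = x1 * e0 - x0 * e1.
Proof.
  intros Hp; destruct (Hmetric x y Hp) as (H01 & _ & Hd).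
  pose proof (nab_pos x y Hp) as HN; pose proof (gradsq_pos x y Hp) as Hg.
  set (N := nab g alpha x y) in *; set (sd := sqrt (detg g x y)).
  assert (Hsd : 0 < sd) by (apply sqrt_lt_R0; assumption).
  assert (Hsd2 : detg g x y = sd * sd) by (unfold sd; rewrite sqrt_sqrt; lra).
  assert (HN2 : N * N = gradsq g alpha x y) by (unfold N, nab; rewrite sqrt_sqrt; lra).
  set (a0 := partial 0%nat alpha x y); set (a1 := partial 1%nat alpha x y).
  set (G00 := g 0%nat 0%nat x y) in *; set (G01 := g 0%nat 1%nat x y) in *;
  set (G11 := g 1%nat 1%nat x y) in *.
  assert (HD : sd * sd = G00 * G11 - G01 * G01).
  { rewrite <- Hsd2; unfold detg; fold G00 G01 G11; rewrite <- H01; reflexivity. }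
  assert (HQ : N * N = (G11 * a0 * a0 - 2 * G01 * a0 * a1 + G00 * a1 * a1) / (sd * sd)).
  { rewrite HN2, (gradsq_quadratic x y Hp), Hsd2; reflexivity. }
  destruct (frame_of_unit_covector G00 G01 G11 a0 a1 N sd HN Hsd HD HQ)
    as (F00 & F01 & F11 & Fsd).
  exists (a0 / N), (a1 / N), ((G00 * (a1 / N) - G01 * (a0 / N)) / sd),
    ((G01 * (a1 / N) - G11 * (a0 / N)) / sd), N, sd.
  assert (X0 : xiL g alpha 0%nat x y = a0 / N) by reflexivity.
  assert (X1 : xiL g alpha 1%nat x y = a1 / N) by reflexivity.
  repeat split; auto.
  - unfold etaVL, lower, etaV, etaU, eps, sum2; cbv beta iota.
    rewrite X0, X1; fold sd G00 G01; field; lra.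
  - unfold etaVL, lower, etaV, etaU, eps, sum2; cbv beta iota.
    rewrite X0, X1; fold sd G11; rewrite <- H01; fold G01; field; lra.
  - unfold a0; field; lra.
  - unfold a1; field; lra.
  - rewrite <- H01; exact F01.
Qed.

Section AtPoint.
Variables x y : R.
Hypothesis Hp : U (x, y).

Lemma partial_g10 k : partial k (g 1%nat 0%nat) x y = partial k (g 0%nat 1%nat) x y.
Proof. apply (partial_ext_open U); auto; intros; symmetry; apply Hmetric; assumption. Qed.

Lemma partial_detg k : partial k (detg g) x y =
  partial k (g 0%nat 0%nat) x y * g 1%nat 1%nat x y
  + g 0%nat 0%nat x y * partial k (g 1%nat 1%nat) x y
  - (partial k (g 0%nat 1%nat) x y * g 1%nat 0%nat x y
     + g 0%nat 1%nat x y * partial k (g 1%nat 0%nat) x y).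
Proof.
  unfold detg; rewrite (partial_minus U x y Hp), !(partial_mult U x y Hp);
    [reflexivity | diff_on_by fail ..].
Qed.

Lemma partial_nab k :
  partial k (nab g alpha) x y = partial k (gradsq g alpha) x y / (2 * nab g alpha x y).
Proof.
  unfold nab; apply (partial_sqrt U x y Hp); [diff_on_by fail | apply gradsq_pos, Hp].
Qed.

Lemma partial_comm_alpha :
  partial 0%nat (partial 1%nat alpha) x y = partial 1%nat (partial 0%nat alpha) x y.
Proof. apply (partial_comm U); assumption. Qed.

Ltac expand_partials := repeat first [
    rewrite (partial_plus U x y Hp) by diff_on_by fail
  | rewrite (partial_minus U x y Hp) by diff_on_by fail
  | rewrite (partial_mult U x y Hp) by diff_on_by fail
  | rewrite partial_opp
  | rewrite partial_const
  | rewrite (partial_div U x y Hp) by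
      (diff_on_by fail || (apply Rgt_not_eq; first [apply detg_pos | apply nab_pos
        | apply sqrt_detg_pos | apply gradsq_pos]; assumption))
  | rewrite (partial_sqrt U x y Hp) by (diff_on_by fail || (apply detg_pos; assumption))
  | rewrite partial_detg
  | rewrite partial_nab
  | progress (unfold gradsq, raise, ginv, sum2; cbv beta iota) ].

Ltac unfold_frame := unfold frame_conn, alpha_Tmix, recomb, cst, xiU, raise, etaVL, lower,
  etaV, covD, divV, kappa, TV, T0, Tmix, Gam, ginv, etaU, eps, xiL, dalpha, sum2; cbv beta iota.

Ltac frame_coords :=
  destruct (frame_at x y Hp) as (x0 & x1 & e0 & e1 & N & sd & HN & Hsd & X0 & X1 & E0 & E1
    & EN & Esd & Edet & A0 & A1 & G00 & G01 & G10 & G11 & Hsdf);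
  rewrite ?X0, ?X1, ?E0, ?E1, ?EN, ?Esd, ?Edet, ?A0, ?A1, ?G00, ?G01, ?G10, ?G11;
  clear Esd Edet; subst sd.

(* In frame coordinates a pointwise tensor identity becomes a rational identity. *)
Ltac frame_field := unfold_frame; rewrite <- ?(HT_sym x y Hp); frame_coords;
  field; repeat split; lra.

(* After the Leibniz, quotient and chain rules only values and first derivatives of g and
   alpha and the (symmetric) Hessian of alpha remain, and the identity is again rational. *)
Ltac frame_calc := unfold_frame; expand_partials; unfold dalpha;
  rewrite ?partial_g10, ?partial_comm_alpha; frame_coords; field; repeat split; lra.

Lemma covD_xiU a b : (a < 2)%nat -> (b < 2)%nat ->
  partial b (xiU g alpha a) x y + sum2 (fun c => Gam g a b c x y * xiU g alpha c x y)
  = etaV g alpha a x y * frame_conn g alpha b x y.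
Proof. intros Ha Hb; destruct a as [|[|a]]; try lia; destruct b as [|[|b]]; try lia; frame_calc. Qed.

Lemma covD_etaV a b : (a < 2)%nat -> (b < 2)%nat ->
  partial b (etaV g alpha a) x y + sum2 (fun c => Gam g a b c x y * etaV g alpha c x y)
  = - xiU g alpha a x y * frame_conn g alpha b x y.
Proof. intros Ha Hb; destruct a as [|[|a]]; try lia; destruct b as [|[|b]]; try lia; frame_calc. Qed.

Lemma xiU_frame_conn :
  sum2 (fun b => xiU g alpha b x y * frame_conn g alpha b x y) = - kappa g alpha x y.
Proof. frame_calc. Qed.

Lemma divV_xiU :
  divV g (xiU g alpha) x y = sum2 (fun a => etaV g alpha a x y * frame_conn g alpha a x y).
Proof. frame_calc. Qed.

Lemma alpha_Tmix_xiU b : (b < 2)%nat ->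
  sum2 (fun a => alpha_Tmix g alpha T a b x y * xiU g alpha a x y) =
  alpha x y * T0 g alpha T x y * xiU g alpha b x y
  + alpha x y * sum2 (fun a => xiL g alpha a x y * TV g alpha T a x y) * etaV g alpha b x y.
Proof. intros Hb; destruct b as [|[|b]]; try lia; frame_field. Qed.

Lemma alpha_Tmix_etaV b : (b < 2)%nat ->
  sum2 (fun a => alpha_Tmix g alpha T a b x y * etaV g alpha a x y)
  = alpha x y * TV g alpha T b x y.
Proof. intros Hb; destruct b as [|[|b]]; try lia; frame_field. Qed.

Lemma etaV_dalpha : sum2 (fun a => etaV g alpha a x y * dalpha alpha a x y) = 0.
Proof. frame_field. Qed.

Lemma xiU_dalpha : sum2 (fun a => xiU g alpha a x y * dalpha alpha a x y) = nab g alpha x y.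
Proof. frame_field. Qed.

Lemma covector_frame_expand (Z : nat -> R) a : (a < 2)%nat ->
  Z a = etaVL g alpha a x y * sum2 (fun b => etaV g alpha b x y * Z b)
        + xiL g alpha a x y * sum2 (fun b => xiU g alpha b x y * Z b).
Proof. intros Ha; destruct a as [|[|a]]; try lia; frame_field. Qed.

Lemma vector_frame_expand (V : nat -> R) a : (a < 2)%nat ->
  V a = sum2 (fun b => etaVL g alpha b x y * V b) * etaV g alpha a x y
        + sum2 (fun b => xiL g alpha b x y * V b) * xiU g alpha a x y.
Proof. intros Ha; destruct a as [|[|a]]; try lia; frame_field. Qed.

Lemma frame_components_eq (Z W : nat -> R) :
  (Z 0%nat = W 0%nat /\ Z 1%nat = W 1%nat) <->
  (sum2 (fun a => etaV g alpha a x y * Z a) = sum2 (fun a => etaV g alpha a x y * W a) /\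
   sum2 (fun a => xiU g alpha a x y * Z a) = sum2 (fun a => xiU g alpha a x y * W a)).
Proof.
  split.
  - intros [H0 H1]; unfold sum2; rewrite H0, H1; split; reflexivity.
  - intros [Heta Hxi].
    rewrite (covector_frame_expand Z 0), (covector_frame_expand W 0),
      (covector_frame_expand Z 1), (covector_frame_expand W 1) by lia.
    rewrite Heta, Hxi; split; reflexivity.
Qed.

Lemma T_recomb a b : (a < 2)%nat -> (b < 2)%nat ->
  T a b x y = recomb g alpha (TV g alpha T) (T0 g alpha T) a b x y.
Proof.
  intros Ha Hb; destruct a as [|[|a]]; try lia; destruct b as [|[|b]]; try lia; frame_field.
Qed.

Lemma recomb_sym_TV_T0 (t : nat -> R) (t0 : R) :
  let M := recomb g alpha (fun a => cst (t a)) (cst t0) in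
  M 0%nat 1%nat x y = M 1%nat 0%nat x y /\
  (forall a, (a < 2)%nat -> TV g alpha M a x y = t a) /\
  T0 g alpha M x y = t0.
Proof.
  intros M; unfold M; split; [|split].
  - frame_field.
  - intros a Ha; destruct a as [|[|a]]; try lia; frame_field.
  - frame_field.
Qed.

End AtPoint.

Section Projections.
Variables x y : R.
Hypothesis Hp : U (x, y).

Lemma divMixed_contract (M : nat -> nat -> Fun) (v : nat -> Fun) :
  (forall a b, (a < 2)%nat -> (b < 2)%nat -> diff_on U (M a b)) ->
  diff_on U (v 0%nat) -> diff_on U (v 1%nat) ->
  sum2 (fun a => v a x y * divMixed g M a x y) =
  divV g (fun b x y => sum2 (fun a => M a b x y * v a x y)) x y
  - sum2 (fun a => sum2 (fun b => M a b x y *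
       (partial b (v a) x y + sum2 (fun c => Gam g a b c x y * v c x y)))).
Proof.
  intros HM Hv0 Hv1; unfold divV, divMixed, sum2; cbv beta.
  rewrite !(partial_plus U x y Hp), !(partial_mult U x y Hp);
    try diff_on_by ltac:(first [assumption | apply HM; lia]).
  unfold Gam, sum2; rewrite !(partial_g10 x y Hp); ring.
Qed.

Lemma alpha_Tmix_contract_etaV :
  sum2 (fun a => etaV g alpha a x y * divMixed g (alpha_Tmix g alpha T) a x y) =
  divV g (fun a => fun x' y' => alpha x' y' * TV g alpha T a x' y') x y
  + alpha x y * sum2 (fun b => xiL g alpha b x y * TV g alpha T b x y)
      * divV g (xiU g alpha) x y
  - alpha x y * kappa g alpha x y * T0 g alpha T x y.
Proof.
  rewrite (divMixed_contract _ (etaV g alpha)); auto using diff_on_alpha_Tmix, diff_on_etaV.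
  rewrite (divV_ext_open U g _ (fun a x' y' => alpha x' y' * TV g alpha T a x' y') x y HU Hp)
    by (intros; apply alpha_Tmix_etaV; assumption).
  rewrite (sum2_ext _ (fun a => sum2 (fun b => alpha_Tmix g alpha T a b x y *
      (- xiU g alpha a x y * frame_conn g alpha b x y))))
    by (intros; apply sum2_ext; intros; rewrite covD_etaV; auto).
  transitivity (divV g (fun a x' y' => alpha x' y' * TV g alpha T a x' y') x y
    + sum2 (fun b => sum2 (fun a => alpha_Tmix g alpha T a b x y * xiU g alpha a x y)
                     * frame_conn g alpha b x y)); [unfold sum2; ring|].
  rewrite (sum2_ext _ (fun b => (alpha x y * T0 g alpha T x y * xiU g alpha b x y
      + alpha x y * sum2 (fun a => xiL g alpha a x y * TV g alpha T a x y)
        * etaV g alpha b x y) * frame_conn g alpha b x y))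
    by (intros; rewrite alpha_Tmix_xiU; auto).
  replace (kappa g alpha x y)
    with (- sum2 (fun b => xiU g alpha b x y * frame_conn g alpha b x y))
    by (rewrite (xiU_frame_conn x y Hp); ring).
  rewrite (divV_xiU x y Hp); unfold sum2; ring.
Qed.

Lemma alpha_Tmix_contract_xiU :
  sum2 (fun a => xiU g alpha a x y * divMixed g (alpha_Tmix g alpha T) a x y) =
  divV g (fun b => fun x' y' =>
        alpha x' y' * T0 g alpha T x' y' * xiU g alpha b x' y'
      + alpha x' y' * sum2 (fun a => xiL g alpha a x' y' * TV g alpha T a x' y')
          * etaV g alpha b x' y') x y
  - alpha x y * sum2 (fun b => sum2 (fun a =>
        etaV g alpha b x y * covD g (xiL g alpha) b a x y * TV g alpha T a x y)).
Proof.
  rewrite (divMixed_contract _ (xiU g alpha)); auto using diff_on_alpha_Tmix.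
  2, 3: apply diff_on_xiU; lia.
  rewrite (divV_ext_open U g _ (fun b x' y' =>
        alpha x' y' * T0 g alpha T x' y' * xiU g alpha b x' y'
      + alpha x' y' * sum2 (fun a => xiL g alpha a x' y' * TV g alpha T a x' y')
          * etaV g alpha b x' y') x y HU Hp)
    by (intros; apply alpha_Tmix_xiU; assumption).
  rewrite (sum2_ext _ (fun a => sum2 (fun b => alpha_Tmix g alpha T a b x y *
      (etaV g alpha a x y * frame_conn g alpha b x y))))
    by (intros; apply sum2_ext; intros; rewrite covD_xiU; auto).
  transitivity (divV g (fun b x' y' =>
        alpha x' y' * T0 g alpha T x' y' * xiU g alpha b x' y'
      + alpha x' y' * sum2 (fun a => xiL g alpha a x' y' * TV g alpha T a x' y')
          * etaV g alpha b x' y') x y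
    - sum2 (fun b => sum2 (fun a => alpha_Tmix g alpha T a b x y * etaV g alpha a x y)
                     * frame_conn g alpha b x y)); [unfold sum2; ring|].
  rewrite (sum2_ext _ (fun b => alpha x y * TV g alpha T b x y * frame_conn g alpha b x y))
    by (intros; rewrite alpha_Tmix_etaV; auto).
  unfold frame_conn, sum2; ring.
Qed.

End Projections.

Lemma kappa_func_dep x y : U (x, y) -> func_dep U alpha (nab g alpha) -> kappa g alpha x y = 0.
Proof.
  intros Hp Hdep; pose proof (Hdep x y Hp) as J; unfold jac2 in J.
  pose proof (nab_pos x y Hp); pose proof (sqrt_detg_pos x y Hp).
  unfold kappa, etaU, eps, sum2, dalpha; cbv beta iota.
  transitivity ((partial 0%nat alpha x y * partial 1%nat (nab g alpha) x y
     - partial 1%nat alpha x y * partial 0%nat (nab g alpha) x y)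
     / (sqrt (detg g x y) * nab g alpha x y ^ 2)).
  - field; split; lra.
  - rewrite J; unfold Rdiv; ring.
Qed.

Lemma divV_TV_split x y : U (x, y) ->
  divV g (fun a => fun x' y' => alpha x' y' * TV g alpha T a x' y') x y =
  divV g (fun a => fun x' y' =>
     alpha x' y' * sum2 (fun b => etaVL g alpha b x' y' * TV g alpha T b x' y')
       * etaV g alpha a x' y') x y
  + divV g (fun a => fun x' y' =>
        alpha x' y' * sum2 (fun b => xiL g alpha b x' y' * TV g alpha T b x' y')
          * xiU g alpha a x' y') x y.
Proof.
  intros Hp; rewrite <- (divV_plus U) by (assumption || diff_on_frame).
  apply (divV_ext_open U); auto; intros b x' y' Hb Hq.
  rewrite (vector_frame_expand x' y' Hq (fun a => TV g alpha T a x' y') b Hb); ring.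
Qed.

Section Star.
Variables (beta : nat -> Fun) (omega T33 : Fun) (x y : R).
Hypothesis Hp : U (x, y).

Lemma star_iff_eqA_eqB :
  (forall a, (a < 2)%nat -> star_eq g alpha beta omega T33 T a x y) <->
  (eqA g alpha beta omega T x y /\ eqB g alpha beta omega T33 T x y).
Proof.
  pose (D a := divMixed g (alpha_Tmix g alpha T) a x y).
  pose (S a := T33 x y * dalpha alpha a x y + lam g beta x y * partial a omega x y).
  transitivity (D 0%nat = S 0%nat /\ D 1%nat = S 1%nat).
  { split.
    - intros H; split; [exact (H 0%nat ltac:(lia)) | exact (H 1%nat ltac:(lia))].
    - intros [H0 H1] [|[|a]] Ha; [exact H0 | exact H1 | lia]. }
  rewrite (frame_components_eq x y Hp D S).
  assert (Seta : sum2 (fun a => etaV g alpha a x y * S a) =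
    lam g beta x y * sum2 (fun a => etaV g alpha a x y * partial a omega x y)).
  { transitivity (T33 x y * sum2 (fun a => etaV g alpha a x y * dalpha alpha a x y)
      + lam g beta x y * sum2 (fun a => etaV g alpha a x y * partial a omega x y));
      [unfold S, sum2; ring | rewrite (etaV_dalpha x y Hp); ring]. }
  assert (Sxi : sum2 (fun a => xiU g alpha a x y * S a) =
    T33 x y * nab g alpha x y
    + lam g beta x y * sum2 (fun a => xiU g alpha a x y * partial a omega x y)).
  { transitivity (T33 x y * sum2 (fun a => xiU g alpha a x y * dalpha alpha a x y)
      + lam g beta x y * sum2 (fun a => xiU g alpha a x y * partial a omega x y));
      [unfold S, sum2; ring | rewrite (xiU_dalpha x y Hp); ring]. }
  rewrite Seta, Sxi; unfold D; cbv beta.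
  rewrite (alpha_Tmix_contract_etaV x y Hp), (alpha_Tmix_contract_xiU x y Hp).
  unfold eqA, eqB; split; intros [HA HB]; split; lra.
Qed.

Lemma eqA_iff_eqC : func_dep U alpha (nab g alpha) ->
  eqA g alpha beta omega T x y <-> eqC g alpha beta omega T x y.
Proof.
  intros Hdep; unfold eqA, eqC.
  rewrite (kappa_func_dep x y Hp Hdep), (divV_TV_split x y Hp); split; intros; lra.
Qed.

End Star.
End Frame.

Theorem proposition2p2
  (U : R * R -> Prop) (g : nat -> nat -> Fun) (alpha : Fun)
  (beta : nat -> Fun) (omega T33 : Fun) (T : nat -> nat -> Fun) :
  open U ->
  (forall a b, (a < 2)%nat -> (b < 2)%nat -> smooth U (g a b)) ->
  smooth U alpha ->
  (forall a, (a < 2)%nat -> smooth U (beta a)) ->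
  smooth U omega -> smooth U T33 ->
  (forall a b, (a < 2)%nat -> (b < 2)%nat -> smooth U (T a b)) ->
  (forall x y, U (x, y) ->
     g 0%nat 1%nat x y = g 1%nat 0%nat x y /\ 0 < g 0%nat 0%nat x y /\ 0 < detg g x y) ->
  (forall x y, U (x, y) -> 0 < alpha x y) ->
  (forall x y, U (x, y) -> gradsq g alpha x y <> 0) ->
  (forall x y, U (x, y) -> T 0%nat 1%nat x y = T 1%nat 0%nat x y) ->
  (forall x y, U (x, y) ->
     (forall a b, (a < 2)%nat -> (b < 2)%nat ->
        T a b x y = recomb g alpha (TV g alpha T) (T0 g alpha T) a b x y) /\
     (forall (t : nat -> R) (t0 : R),
        let M := recomb g alpha (fun a => cst (t a)) (cst t0) in
        M 0%nat 1%nat x y = M 1%nat 0%nat x y /\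
        (forall a, (a < 2)%nat -> TV g alpha M a x y = t a) /\
        T0 g alpha M x y = t0))
  /\
  (func_indep U alpha (nab g alpha) ->
     ((forall x y, U (x, y) -> forall a, (a < 2)%nat ->
          star_eq g alpha beta omega T33 T a x y)
      <->
      (forall x y, U (x, y) ->
          eqA g alpha beta omega T x y /\ eqB g alpha beta omega T33 T x y)))
  /\
  (func_dep U alpha (nab g alpha) ->
     ((forall x y, U (x, y) -> forall a, (a < 2)%nat ->
          star_eq g alpha beta omega T33 T a x y)
      <->
      (forall x y, U (x, y) ->
          eqB g alpha beta omega T33 T x y /\ eqC g alpha beta omega T x y))).
Proof.
  intros HU Hg Halpha _ _ _ HT Hmetric _ Hgrad HT_sym.
  assert (Hstar : forall x y, U (x, y) ->
    (forall a, (a < 2)%nat -> star_eq g alpha beta omega T33 T a x y) <->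
    (eqA g alpha beta omega T x y /\ eqB g alpha beta omega T33 T x y))
    by (intros; apply (star_iff_eqA_eqB U); assumption).
  split; [|split].
  - intros x y Hp; split.
    + intros a b Ha Hb; apply (T_recomb U); assumption.
    + intros t t0; apply (recomb_sym_TV_T0 U); assumption.
  - intros _; split; intros H x y Hp; apply Hstar; auto.
  - intros Hdep.
    assert (HAC : forall x y, U (x, y) ->
      eqA g alpha beta omega T x y <-> eqC g alpha beta omega T x y)
      by (intros; apply (eqA_iff_eqC U); assumption).
    split; intros H x y Hp.
    + destruct (proj1 (Hstar x y Hp) (H x y Hp)) as [HA HB].
      split; [assumption | apply HAC; assumption].
    + destruct (H x y Hp) as [HB HC].
      apply Hstar; [assumption | split; [apply HAC |]; assumption].
Qed.
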